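(* There is an absolute constant $c_0>0$ such that the following holds. Let $\alpha\in(0,\tfrac12)$, $\beta\in(0,1)$, and let $G$ be a graph on $n$ vertices with at least $\alpha n^2$ edges. Then either $G$ contains at least $c_0\alpha^{80}\beta^{20}n^4$ induced copies of $C_4$, or there is a set $X\subseteq V(G)$ with $|X|\ge0.1\alpha^2n$ and $d(X)\ge1-\beta$.
   Context: For a nonempty $X\subseteq V(G)$ (with $|X|\ge 2$), $d(X)=e(X)/\binom{|X|}{2}$, where $e(X)$ is the number of edges of $G$ with both endpoints in $X$. An induced copy of $C_4$ is a set of $4$ vertices inducing a $4$-cycle. *)

(* A simple graph is a symmetric irreflexive relation e on a finType T. *)
From HB Require Import structures.
From mathcomp Require Import all_boot all_order all_algebra.
Set Implicit Arguments. Unset Strict Implicit. Unset Printing Implicit Defensive.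
Import Order.TTheory GRing.Theory Num.Theory.

Definition edges_in (T : finType) (e : rel T) (X : {set T}) : nat :=
  #|[set E : {set T} | (E \subset X) && (#|E| == 2) &&
      [exists x : T, exists y : T, (E == [set x; y]) && e x y]]|.

Definition num_edges (T : finType) (e : rel T) : nat := edges_in e [set: T].

(* d(X) = e(X) / binom(|X|,2), meaningful for |X| >= 2 *)
Definition density (R : fieldType) (T : finType) (e : rel T) (X : {set T}) : R :=
  ((edges_in e X)%:R / ('C(#|X|, 2))%:R)%R.

Definition induces_C4 (T : finType) (e : rel T) (S : {set T}) : bool :=
  (#|S| == 4) &&
  [exists a : T, exists b : T, exists c : T, exists d : T,
     [&& S == [set a; b; c; d], e a b, e b c, e c d, e d a,
         ~~ e a c & ~~ e b d]].

Definition num_induced_C4 (T : finType) (e : rel T) : nat :=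
  #|[set S : {set T} | induces_C4 e S]|.

From HB Require Import structures.
From mathcomp Require Import all_boot all_order all_algebra.
From mathcomp Require Import zify ring lra.
Set Implicit Arguments. Unset Strict Implicit. Unset Printing Implicit Defensive.
Import Order.TTheory GRing.Theory Num.Theory.

(* Write p = alpha^2 n and call a non-adjacent pair (a, c) rich when it has at least
   p/10 common neighbours.  If the common neighbourhood of a rich pair is (1 - beta)-dense
   it is the required set.  Otherwise it contains at least beta (p/10)^2 non-adjacent pairs
   (b, d), each closing an induced C4 a-b-c-d, so beta p^2/100 rich pairs already give
   about beta^2 p^4 induced C4's.  If there are fewer rich pairs, averaging the edge count
   of the neighbourhoods finds a vertex whose neighbourhood H spans more than
   3/4 |H|^2 + (p/5) |H| ordered edges; the vertices of H of degree at least (|H| + p/10)/2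
   inside H then form a set of size > 7p/20 in which every non-adjacent pair is rich, hence
   with at most beta p^2/100 non-edges: it is (1 - beta)-dense.  For p <= 20 a single edge
   suffices.  This gives the constant 2^-24 even with alpha^8 beta^2 in place of
   alpha^80 beta^20. *)

Lemma sum_mem_card (T : finType) (A : {pred T}) : \sum_(x : T) ((x \in A) : nat) = #|A|.
Proof. by rewrite -sum1_card [RHS]big_mkcond; apply: eq_bigr => x _; case: (x \in A). Qed.

Lemma set2_eq (T : finType) (x y a b : T) : x != y ->
  ([set a; b] == [set x; y]) = ((a, b) == (x, y)) || ((a, b) == (y, x)).
Proof.
move=> nxy; rewrite !xpair_eqE; apply/idP/idP; last first.
  by case/orP=> /andP[/eqP-> /eqP->] //; rewrite setUC.
move/eqP=> Eab.
have ha : a \in [set x; y] by rewrite -Eab set21.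
have hb : b \in [set x; y] by rewrite -Eab set22.
have hx : x \in [set a; b] by rewrite Eab set21.
have hy : y \in [set a; b] by rewrite Eab set22.
move: ha hb hx hy; rewrite !inE.
by case/orP=> /eqP->; case/orP=> /eqP->; rewrite ?eqxx ?(eq_sym y x) ?(negPf nxy) ?orbT ?andbT.
Qed.

Lemma sum_mem_card4 (T : finType) (S : {set T}) :
  \sum_(a : T) \sum_(c : T) \sum_(b : T) \sum_(d : T)
     ((d \in S) * ((b \in S) * ((c \in S) * (a \in S)))) = (#|S| ^ 4)%N.
Proof.
under eq_bigr => a _ do under eq_bigr => c _ do under eq_bigr => b _ do
  rewrite -big_distrl /= sum_mem_card.
under eq_bigr => a _ do under eq_bigr => c _ do
  rewrite -big_distrr /= -big_distrl /= sum_mem_card.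
under eq_bigr => a _ do rewrite -big_distrr /= -big_distrr /= -big_distrl /= sum_mem_card.
by rewrite -big_distrr /= -big_distrr /= -big_distrr /= sum_mem_card !expnS expn0 muln1 !mulnA.
Qed.

Lemma bin2_double (m : nat) : ('C(m, 2) * 2 = m * m.-1)%N.
Proof. by elim: m => // m IH; rewrite binS bin1 mulnDl IH; case: m {IH} => //= m; lia. Qed.

Section Graph.
Variables (T : finType) (e : rel T).
Hypotheses (e_sym : symmetric e) (e_irr : irreflexive e).

Definition nbhd (v : T) : {set T} := [set u | e v u].
Definition common_nbhd (a c : T) : {set T} := nbhd a :&: nbhd c.
Definition nonadj (a c : T) : bool := (a != c) && ~~ e a c.

Definition adj_pairs (X : {set T}) : nat :=
  \sum_(x : T) \sum_(y : T) [&& x \in X, y \in X & e x y].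
Definition nonadj_pairs (X : {set T}) : nat :=
  \sum_(x : T) \sum_(y : T) [&& x \in X, y \in X & nonadj x y].

Lemma adj_neq (x y : T) : e x y -> x != y.
Proof. by move=> exy; apply/eqP=> Exy; move: exy; rewrite Exy e_irr. Qed.

Lemma nonadj_sym : symmetric nonadj.
Proof. by move=> x y; rewrite /nonadj eq_sym e_sym. Qed.

Lemma adj_pairsD_nonadj_pairs (X : {set T}) :
  (adj_pairs X + nonadj_pairs X = #|X| * #|X|.-1)%N.
Proof.
rewrite /adj_pairs /nonadj_pairs -big_split /= -[k in (k * _)%N]sum_mem_card big_distrl /=.
apply: eq_bigr => x _; rewrite -big_split /=.
case xX: (x \in X); last by rewrite mul0n big1 // => y _.
rewrite mul1n (cardsD1 x X) xX /= -sum_mem_card; apply: eq_bigr => y _.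
rewrite /nonadj !inE eq_sym; case: (eqVneq x y) => [->|_]; first by rewrite e_irr andbF.
by case: (y \in X); case: (e x y).
Qed.

Lemma edges_in_adj_pairs (X : {set T}) : (2 * edges_in e X = adj_pairs X)%N.
Proof.
rewrite /adj_pairs /edges_in pair_big /=.
set S2 := [set E : {set T} | _].
rewrite (_ : \sum_(p | true && true) _ =
    \sum_(p : T * T | [&& p.1 \in X, p.2 \in X & e p.1 p.2]) 1%N); last first.
  by rewrite [RHS]big_mkcond; apply: eq_bigr => p _; case: ([&& _, _ & _]).
rewrite (partition_big (fun p : T * T => [set p.1; p.2]) (mem S2)) /=; last first.
  move=> [a b] /= /and3P[aX bX eab]; rewrite inE cards2 (adj_neq eab) andbT.
  apply/andP; split; last by apply/existsP; exists a; apply/existsP; exists b; rewrite eqxx eab.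
  by apply/subsetP=> z; rewrite !inE => /orP[]/eqP->.
rewrite mulnC -sum_nat_const; apply: eq_bigr => E.
rewrite inE => /andP[/andP[EX _] /existsP[x /existsP[y /andP[/eqP EE exy]]]].
have xX : x \in X by apply: (subsetP EX); rewrite EE set21.
have yX : y \in X by apply: (subsetP EX); rewrite EE set22.
rewrite (eq_bigl (mem [set (x, y); (y, x)])); last first.
  move=> [a b] /=; rewrite EE set2_eq ?adj_neq // !inE.
  case: eqP => [[-> ->]|_] /=; first by rewrite xX yX exy.
  case: eqP => [[-> ->]|_] /=; last by rewrite andbF.
  by rewrite xX yX e_sym exy.
by rewrite sum1_card cards2 xpair_eqE negb_and adj_neq.
Qed.

Lemma adj_pairs_deg (H : {set T}) :
  adj_pairs H = (\sum_(x : T) ((x \in H) * #|nbhd x :&: H|))%N.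
Proof.
apply: eq_bigr => x _; rewrite -sum_mem_card big_distrr /=; apply: eq_bigr => y _.
by rewrite !inE; case: (x \in H); case: (y \in H); case: (e x y).
Qed.

Lemma adj_pairs_setT : adj_pairs setT = (\sum_(x : T) #|nbhd x|)%N.
Proof. by rewrite adj_pairs_deg; apply: eq_bigr => x _; rewrite inE mul1n setIT. Qed.

Lemma card_common_nbhd_ge (H : {set T}) (a c : T) :
  (#|nbhd a :&: H| + #|nbhd c :&: H| <= #|H| + #|common_nbhd a c|)%N.
Proof.
rewrite -cardsUI; apply: leq_add.
  by apply: subset_leq_card; rewrite -setIUl subsetIr.
by apply: subset_leq_card; apply/subsetP=> z; rewrite !inE => /andP[/andP[-> _] /andP[-> _]].
Qed.

Lemma induces_C4_common_nbhd (a b c d : T) :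
  nonadj a c -> b \in common_nbhd a c -> d \in common_nbhd a c -> nonadj b d ->
  induces_C4 e [set a; b; c; d].
Proof.
rewrite /nonadj !inE => /andP[nac neac] /andP[eab ecb] /andP[ead ecd] /andP[nbd nebd].
apply/andP; split.
  have E4 : [set a; b; c; d] =i [:: a; b; c; d] by move=> z; rewrite !inE !orbA.
  rewrite (eq_card E4); apply/eqP/card_uniqP => /=.
  by rewrite !inE !negb_or nac nbd !adj_neq // e_sym.
apply/existsP; exists a; apply/existsP; exists b; apply/existsP; exists c; apply/existsP; exists d.
by rewrite eqxx eab (e_sym b c) ecb ecd (e_sym d a) ead neac nebd.
Qed.

(* Each induced [C4] arises from at most [4^4] choices of [(a, c, b, d)]. *)
Lemma nonadj_pairs_common_nbhd_le :
  (\sum_(a : T) \sum_(c : T) (nonadj a c * nonadj_pairs (common_nbhd a c))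
     <= 256 * num_induced_C4 e)%N.
Proof.
rewrite /nonadj_pairs.
under eq_bigr => a _ do under eq_bigr => c _ do
  (rewrite big_distrr /=; under eq_bigr => b _ do rewrite big_distrr /=).
set C := [set S | induces_C4 e S].
apply: (@leq_trans (\sum_(a : T) \sum_(c : T) \sum_(b : T) \sum_(d : T) \sum_(S in C)
     ((d \in S) * ((b \in S) * ((c \in S) * (a \in S)))))).
  apply: leq_sum => a _; apply: leq_sum => c _; apply: leq_sum => b _; apply: leq_sum => d _.
  case nac: (nonadj a c); last by rewrite mul0n.
  case: and3P => [[hb hd nbd]|]; last by rewrite muln0.
  have SC : [set a; b; c; d] \in C by rewrite inE; apply: induces_C4_common_nbhd.
  by rewrite (bigD1 _ SC) /= !inE !eqxx ?orbT /= leq_addr.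
under eq_bigr => a _ do under eq_bigr => c _ do under eq_bigr => b _ do rewrite exchange_big /=.
under eq_bigr => a _ do under eq_bigr => c _ do rewrite exchange_big /=.
under eq_bigr => a _ do rewrite exchange_big /=.
rewrite exchange_big /= /num_induced_C4 -/C mulnC -sum_nat_const.
apply: leq_sum => S; rewrite inE => /andP[/eqP S4 _].
by rewrite sum_mem_card4 S4.
Qed.

Lemma sum_nonadj_pairs_nbhd :
  (\sum_(v : T) nonadj_pairs (nbhd v)
     = \sum_(a : T) \sum_(c : T) (nonadj a c * #|common_nbhd a c|))%N.
Proof.
rewrite /nonadj_pairs; under eq_bigr => v _ do rewrite exchange_big /=.
rewrite exchange_big /=; apply: eq_bigr => a _.
rewrite exchange_big /=; apply: eq_bigr => c _.
rewrite -sum_mem_card big_distrr /=; apply: eq_bigr => v _.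
rewrite !inE (e_sym a v) (e_sym c v).
by rewrite (nonadj_sym c); case: (e v a); case: (e v c); case: (nonadj a c).
Qed.

End Graph.

Local Open Scope ring_scope.

Lemma natr_mul_pred (R : numDomainType) (m : nat) :
  ((m * m.-1)%N%:R : R) = m%:R * (m%:R - 1).
Proof. by case: m => [|m]; rewrite ?mul0n ?mul0r // /= natrM -addn1 natrD addrK. Qed.

Lemma sum_mem_natr (R : numDomainType) (T : finType) (A : {pred T}) (x : R) :
  \sum_(i : T) ((i \in A)%:R * x) = #|A|%:R * x.
Proof. by rewrite -mulr_suml -natr_sum sum_mem_card. Qed.

Section Density.
Variables (R : realFieldType) (T : finType) (e : rel T).
Hypotheses (e_sym : symmetric e) (e_irr : irreflexive e).

Lemma adj_pairsE (X : {set T}) :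
  (adj_pairs e X)%:R = #|X|%:R * (#|X|%:R - 1) - (nonadj_pairs e X)%:R :> R.
Proof. by rewrite -natr_mul_pred -(adj_pairsD_nonadj_pairs e_irr X) natrD addrK. Qed.

Lemma density_adj_pairs (X : {set T}) :
  density R e X = (adj_pairs e X)%:R / (#|X|%:R * (#|X|%:R - 1)).
Proof.
rewrite /density -edges_in_adj_pairs // -natr_mul_pred -bin2_double !natrM.
have [->|nz] := eqVneq ('C(#|X|, 2)%:R : R) 0; first by rewrite mul0r !invr0 !mulr0.
have n2 : (2%:R : R) != 0 by rewrite pnatr_eq0.
by field.
Qed.

Lemma nonadj_pairs_ge_of_sparse (beta k : R) (X : {set T}) :
  0 < beta -> 2 <= k -> k <= #|X|%:R ->
  density R e X < 1 - beta -> beta * (k * (k - 1)) <= (nonadj_pairs e X)%:R.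
Proof.
move=> beta_gt0 k_ge2 kX; rewrite density_adj_pairs adj_pairsE.
set m := #|X|%:R in kX *; set u := (nonadj_pairs e X)%:R.
have m_pos : 0 < m * (m - 1) by nra.
rewrite ltr_pdivrMr // => sparse.
suff : beta * (k * (k - 1)) <= beta * (m * (m - 1)) by nra.
by rewrite ler_pM2l //; nra.
Qed.

Lemma dense_of_nonadj_pairs_le (beta : R) (X : {set T}) : (2 <= #|X|)%N ->
  (nonadj_pairs e X)%:R <= beta * (#|X|%:R * (#|X|%:R - 1)) -> 1 - beta <= density R e X.
Proof.
rewrite -(ler_nat R) density_adj_pairs adj_pairsE => X_ge2.
set m := #|X|%:R in X_ge2 *; set u := (nonadj_pairs e X)%:R => few.
have m_pos : 0 < m * (m - 1) by nra.
by rewrite ler_pdivlMr //; lra.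
Qed.

Lemma exists_edge_set : (0 < num_edges e)%N ->
  exists X : {set T}, #|X| = 2%N /\ density R e X = 1.
Proof.
rewrite -(ltn_pmul2l (isT : 0 < 2)%N) muln0 edges_in_adj_pairs // adj_pairs_setT.
rewrite lt0n sum_nat_eq0 => /forallPn[x]; rewrite -lt0n card_gt0 => /set0Pn[y].
rewrite inE => exy; exists [set x; y]; rewrite cards2 (adj_neq e_irr exy); split => //.
have no_nonadj : nonadj_pairs e [set x; y] = 0%N.
  apply/eqP; rewrite sum_nat_eq0; apply/forallP => a; rewrite sum_nat_eq0.
  apply/forallP => b; rewrite eqb0 !inE /nonadj.
  apply/negP => /and4P[]; do 2 case/orP => /eqP->; rewrite ?eqxx // => _.
    by rewrite exy.
  by rewrite e_sym exy.
have := adj_pairsD_nonadj_pairs e_irr [set x; y].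
rewrite no_nonadj addn0 cards2 (adj_neq e_irr exy) => adj2.
by rewrite density_adj_pairs adj2 cards2 (adj_neq e_irr exy) -natr_mul_pred divff // pnatr_eq0.
Qed.

End Density.

Section RichPairs.
Variables (R : realFieldType) (T : finType) (e : rel T).
Hypotheses (e_sym : symmetric e) (e_irr : irreflexive e).

Definition rich (k : R) (a c : T) : bool :=
  nonadj e a c && (k <= #|common_nbhd e a c|%:R).

Definition num_rich (k : R) : nat := \sum_(a : T) \sum_(c : T) rich k a c.

Definition hub (H : {set T}) (k : R) : {set T} :=
  [set a in H | #|H|%:R + k <= 2 * #|nbhd e a :&: H|%:R].

Lemma num_rich_le_C4 (beta k : R) : 0 < beta -> 2 <= k ->
  (forall a c, rich k a c -> density R e (common_nbhd e a c) < 1 - beta) ->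
  (num_rich k)%:R * (beta * (k * (k - 1))) <= 256 * (num_induced_C4 e)%:R.
Proof.
move=> beta_gt0 k_ge2 sparse.
apply: (@le_trans _ _
  (\sum_(a : T) \sum_(c : T) (nonadj e a c * nonadj_pairs e (common_nbhd e a c)))%N%:R).
  rewrite /num_rich !natr_sum mulr_suml; apply: ler_sum => a _.
  rewrite !natr_sum mulr_suml; apply: ler_sum => c _.
  case rac: (rich k a c); last by rewrite mul0r ler0n.
  move: (rac) => /andP[-> k_le]; rewrite mul1n mul1r.
  exact: nonadj_pairs_ge_of_sparse (sparse _ _ rac).
by rewrite -natrM ler_nat nonadj_pairs_common_nbhd_le.
Qed.

Lemma sum_nonadj_pairs_nbhd_le (k : R) : 0 <= k ->
  (\sum_(v : T) nonadj_pairs e (nbhd e v))%:R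
    <= (num_rich k)%:R * #|T|%:R + #|T|%:R * (#|T|%:R * k).
Proof.
move=> k_ge0; rewrite sum_nonadj_pairs_nbhd // natr_sum.
have -> : (num_rich k)%:R * #|T|%:R + #|T|%:R * (#|T|%:R * k)
    = \sum_a \sum_c ((rich k a c)%:R * #|T|%:R + k).
  symmetry; under eq_bigr => a _ do
    rewrite big_split /= sumr_const -mulr_natr -mulr_suml -natr_sum.
  by rewrite big_split /= sumr_const -mulr_natr -mulr_suml -natr_sum; ring.
apply: ler_sum => a _; rewrite natr_sum; apply: ler_sum => c _.
rewrite /rich; case: (nonadj e a c) => /=; last by rewrite mul0n mul0r add0r.
rewrite mul1n; case: (lerP k) => [_ | small]; last by rewrite mul0r add0r ltW.
by rewrite mul1r ler_wpDr // ler_nat max_card.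
Qed.

Lemma adj_pairs_le_hub (H : {set T}) (k : R) : 0 <= k ->
  (adj_pairs e H)%:R <= #|hub H k|%:R * #|H|%:R + #|H|%:R * ((#|H|%:R + k) / 2).
Proof.
move=> k_ge0; set m := #|H|%:R; rewrite adj_pairs_deg natr_sum.
have -> : #|hub H k|%:R * m + m * ((m + k) / 2)
    = \sum_x ((x \in hub H k)%:R * m + (x \in H)%:R * ((m + k) / 2)).
  by rewrite big_split /= !sum_mem_natr.
apply: ler_sum => x _; rewrite natrM.
have deg_le : #|nbhd e x :&: H|%:R <= m by rewrite ler_nat subset_leq_card // subsetIr.
have [xH|xNH] := boolP (x \in H); last by rewrite inE (negPf xNH) !mul0r addr0.
rewrite inE xH /=; case: (lerP (m + k)) => [_ | low]; rewrite !mul1r ?mul0r ?add0r.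
  have : 0 <= (m + k) / 2 by rewrite divr_ge0 ?addr_ge0.
  lra.
lra.
Qed.

Lemma nonadj_pairs_hub_le (H : {set T}) (k : R) :
  (nonadj_pairs e (hub H k) <= num_rich k)%N.
Proof.
apply: leq_sum => x _; apply: leq_sum => y _.
case: and3P => [[xQ yQ nxy]|] //=; rewrite /rich nxy lt0b.
have := card_common_nbhd_ge e H x y; rewrite -(ler_nat R) !natrD.
move: xQ yQ; rewrite !inE => /andP[_ ] + /andP[_]; lra.
Qed.

Lemma hub_card_gt (H : {set T}) (k s : R) : 0 <= k ->
  3 / 4 * #|H|%:R ^+ 2 + s * #|H|%:R < (adj_pairs e H)%:R ->
  2 * s - k / 2 < #|hub H k|%:R.
Proof.
move=> k_ge0 dense_H; have := adj_pairs_le_hub H k_ge0.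
have := adj_pairsE R e_irr H; have := ler0n R (nonadj_pairs e H).
set m := #|H|%:R in dense_H *; set q := #|hub H k|%:R => na_ge0 adjE hub_bound.
have m_gt0 : 0 < m.
  rewrite lt_def ler0n andbT; apply/eqP => m0.
  by move: dense_H adjE; rewrite m0; lra.
suff : m * (2 * s - k / 2) < m * q by rewrite ltr_pM2l.
nra.
Qed.

Lemma sum_card_nbhd : \sum_(v : T) #|nbhd e v|%:R = 2 * (num_edges e)%:R :> R.
Proof. by rewrite -natr_sum -adj_pairs_setT -(edges_in_adj_pairs e_sym e_irr) natrM. Qed.

(* Averaging over [v]: the defect [3/4 d^2 + s d - adj_pairs (nbhd v)] is at most
   [nonadj_pairs (nbhd v) + alpha^2 n^2 - (alpha n - 1 - s) d], by [(d/2 - alpha n)^2 >= 0]. *)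
Lemma exists_dense_nbhd (alpha s k : R) : 0 <= k -> 0 <= alpha * #|T|%:R - 1 - s ->
  alpha * #|T|%:R ^+ 2 <= (num_edges e)%:R ->
  (num_rich k)%:R * #|T|%:R + #|T|%:R * (#|T|%:R * k) + alpha ^+ 2 * #|T|%:R ^+ 3
    < (alpha * #|T|%:R - 1 - s) * (2 * (alpha * #|T|%:R ^+ 2)) ->
  exists v, 3 / 4 * #|nbhd e v|%:R ^+ 2 + s * #|nbhd e v|%:R < (adj_pairs e (nbhd e v))%:R.
Proof.
move=> k_ge0 c_ge0 edges gap; set n := #|T|%:R in edges gap *.
set c := alpha * n - 1 - s in c_ge0 gap.
pose f v := (adj_pairs e (nbhd e v))%:R - 3 / 4 * #|nbhd e v|%:R ^+ 2 - s * #|nbhd e v|%:R.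
have f_ge v : c * #|nbhd e v|%:R - alpha ^+ 2 * n ^+ 2 - (nonadj_pairs e (nbhd e v))%:R <= f v.
  rewrite /f /c (adj_pairsE R e_irr); have := sqr_ge0 (#|nbhd e v|%:R / 2 - alpha * n); nra.
have sum_f_gt0 : 0 < \sum_v f v.
  apply: (lt_le_trans _ (ler_sum _ (fun v _ => f_ge v))).
  rewrite !sumrB -mulr_sumr sum_card_nbhd sumr_const -mulr_natr -natr_sum -/n.
  have := sum_nonadj_pairs_nbhd_le k_ge0; rewrite -/n.
  have : c * (2 * (alpha * n ^+ 2)) <= c * (2 * (num_edges e)%:R).
    by rewrite ler_wpM2l // ler_wpM2l.
  lra.
have [/existsP[v fv]|/existsPn f_le0] := boolP [exists v, 0 < f v].
  by exists v; rewrite /f in fv; lra.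
suff : \sum_v f v <= \sum_(v : T) 0 by rewrite big1_eq; lra.
by apply: ler_sum => v _; rewrite leNgt f_le0.
Qed.

End RichPairs.

Section LargeGraph.
Variables (R : realFieldType) (alpha beta : R) (T : finType) (e : rel T).
Hypotheses (e_sym : symmetric e) (e_irr : irreflexive e).
Hypotheses (alpha_gt0 : 0 < alpha) (alpha_lt_half : alpha < 1 / 2).
Hypotheses (beta_gt0 : 0 < beta) (beta_lt1 : beta < 1).

Let n : R := #|T|%:R.
Local Notation p := (alpha ^+ 2 * n).
Hypothesis edges_ge : alpha * n ^+ 2 <= (num_edges e)%:R.
Hypothesis p_gt20 : 20 < p.

(* [lra] and [nra] ignore section hypotheses: the proofs below restate those they use. *)

Lemma many_rich_pairs_C4 :
  (forall a c, rich e (p / 10) a c -> density R e (common_nbhd e a c) < 1 - beta) ->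
  beta * p ^+ 2 / 100 <= (num_rich e (p / 10))%:R ->
  beta ^+ 2 * p ^+ 4 / 2 ^+ 24 <= (num_induced_C4 e)%:R.
Proof.
move=> sparse many; have := num_rich_le_C4 e_sym e_irr beta_gt0 _ sparse.
set B := (num_rich e (p / 10))%:R; set k := p / 10.
have k_gt2 : 2 < k by rewrite /k; have := p_gt20; lra.
move=> /(_ (ltW k_gt2)) C4_ge.
have k2 : k ^+ 2 / 2 <= k * (k - 1).
  have : 0 <= k * (k - 2) by apply: mulr_ge0; lra.
  nra.
have bk_ge0 : 0 <= beta * (k * (k - 1)).
  by rewrite mulr_ge0 ?(ltW beta_gt0) //; apply: mulr_ge0; lra.
have : beta * p ^+ 2 / 100 * (beta * (k * (k - 1))) <= B * (beta * (k * (k - 1))).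
  by rewrite ler_wpM2r.
have : beta * p ^+ 2 / 100 * (beta * (k ^+ 2 / 2))
    <= beta * p ^+ 2 / 100 * (beta * (k * (k - 1))).
  by rewrite ler_wpM2l ?ler_wpM2l ?(ltW beta_gt0) // divr_ge0 // mulr_ge0 ?sqr_ge0 ?(ltW beta_gt0).
have -> : beta * p ^+ 2 / 100 * (beta * (k ^+ 2 / 2)) = beta ^+ 2 * p ^+ 4 / (100 * 100 * 2).
  by rewrite /k; field.
have : 0 <= beta ^+ 2 * p ^+ 4 by rewrite mulr_ge0 ?exprn_even_ge0.
lra.
Qed.

Lemma few_rich_pairs_dense :
  (num_rich e (p / 10))%:R < beta * p ^+ 2 / 100 ->
  exists X : {set T},
    [/\ (2 <= #|X|)%N, 1 / 10 * alpha ^+ 2 * n <= #|X|%:R & 1 - beta <= density R e X].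
Proof.
move=> few; set B := (num_rich e (p / 10))%:R in few.
have [a0 a1 b0 b1 p20] := And5 alpha_gt0 alpha_lt_half beta_gt0 beta_lt1 p_gt20.
have n_gt0 : 0 < n by rewrite -(pmulr_rgt0 _ (exprn_gt0 2 a0)); lra.
have an_gt40 : 40 < alpha * n by nra.
have gap : B * n + n * (n * (p / 10)) + alpha ^+ 2 * n ^+ 3
    < (alpha * n - 1 - p / 5) * (2 * (alpha * n ^+ 2)).
  have : B * n < beta * p ^+ 2 / 100 * n by rewrite ltr_pM2r.
  have bracket : 1 / 2 <= 9 / 10 - 2 / 5 * alpha - beta * alpha ^+ 2 / 100 by nra.
  have : 0 < n ^+ 2 * (p * (9 / 10 - 2 / 5 * alpha - beta * alpha ^+ 2 / 100) - 2 * alpha).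
    by rewrite mulr_gt0 ?exprn_gt0 //; nra.
  have -> : (alpha * n - 1 - p / 5) * (2 * (alpha * n ^+ 2)) = n ^+ 2 *
      (p * (9 / 10 - 2 / 5 * alpha - beta * alpha ^+ 2 / 100) - 2 * alpha)
      + beta * p ^+ 2 / 100 * n + n * (n * (p / 10)) + alpha ^+ 2 * n ^+ 3.
    by field.
  lra.
have [v dense_nbhd] := exists_dense_nbhd e_sym e_irr (k := p / 10) (alpha := alpha)
  (s := p / 5) ltac:(lra) ltac:(nra) edges_ge gap.
set Q := hub e (nbhd e v) (p / 10).
have Q_gt : 2 * (p / 5) - p / 10 / 2 < #|Q|%:R.
  by apply: hub_card_gt dense_nbhd => //; lra.
have Q_ge2 : (2 <= #|Q|)%N by rewrite -(ler_nat R); lra.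
exists Q; split => //; first lra.
apply: dense_of_nonadj_pairs_le => //.
have : (nonadj_pairs e Q)%:R <= B by rewrite ler_nat nonadj_pairs_hub_le.
have : p ^+ 2 / 100 <= #|Q|%:R * (#|Q|%:R - 1) by nra.
nra.
Qed.

Lemma large_graph_case :
  beta ^+ 2 * p ^+ 4 / 2 ^+ 24 <= (num_induced_C4 e)%:R \/
  exists X : {set T},
    [/\ (2 <= #|X|)%N, 1 / 10 * alpha ^+ 2 * n <= #|X|%:R & 1 - beta <= density R e X].
Proof.
have [/existsP[a /existsP[c /andP[/andP[_ W_ge] W_dense]]]|/existsPn sparse] :=
  boolP [exists a, exists c,
    rich e (p / 10) a c && (1 - beta <= density R e (common_nbhd e a c))].
  have p20 := p_gt20.
  right; exists (common_nbhd e a c); split => //; last by lra.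
  have : (2 : R) < #|common_nbhd e a c|%:R by lra.
  by rewrite ltr_nat => /ltnW.
have sparse_rich a c : rich e (p / 10) a c -> density R e (common_nbhd e a c) < 1 - beta.
  by move=> rac; move: (sparse a) => /existsPn/(_ c); rewrite rac ltNge.
have [many|few] := lerP (beta * p ^+ 2 / 100) (num_rich e (p / 10))%:R.
  by left; apply: many_rich_pairs_C4.
by right; apply: few_rich_pairs_dense.
Qed.

End LargeGraph.

Lemma C4_bound_weaken (R : realFieldType) (alpha beta n : R) :
  0 <= alpha <= 1 -> 0 <= beta <= 1 -> 0 <= n ->
  (2 ^+ 24)^-1 * alpha ^+ 80 * beta ^+ 20 * n ^+ 4
    <= beta ^+ 2 * (alpha ^+ 2 * n) ^+ 4 / 2 ^+ 24.
Proof.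
move=> /andP[a0 a1] /andP[b0 b1] n0.
have -> : beta ^+ 2 * (alpha ^+ 2 * n) ^+ 4 / 2 ^+ 24
    = (2 ^+ 24)^-1 * (alpha ^+ 8 * beta ^+ 2) * n ^+ 4 by field.
rewrite -(mulrA _ (alpha ^+ 80)) ler_wpM2r ?exprn_ge0 // ler_wpM2l ?invr_ge0 ?exprn_ge0 //.
by rewrite ler_pM ?exprn_ge0 // ler_wiXn2l.
Qed.

Theorem lemma3p3 :
  exists c0 : rat, 0 < c0 /\
  forall (R : realFieldType) (alpha beta : R) (T : finType) (e : rel T),
    symmetric e -> irreflexive e ->
    0 < alpha -> alpha < 1 / 2 -> 0 < beta -> beta < 1 ->
    alpha * (#|T|%:R) ^+ 2 <= (num_edges e)%:R ->
    ratr c0 * alpha ^+ 80 * beta ^+ 20 * (#|T|%:R) ^+ 4 <= (num_induced_C4 e)%:R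
    \/ exists X : {set T},
         [/\ (2 <= #|X|)%N,
             1 / 10 * alpha ^+ 2 * #|T|%:R <= #|X|%:R
           & 1 - beta <= density R e X].
Proof.
exists (2%:R ^+ 24)^-1; split; first by rewrite invr_gt0 exprn_gt0.
move=> R alpha beta T e e_sym e_irr a0 a1 b0 b1 edges.
rewrite fmorphV rmorphXn rmorph_nat.
have [T0|T_gt0] := posnP #|T|; first by left; rewrite T0 expr0n mulr0.
have [small|large] := lerP (alpha ^+ 2 * #|T|%:R) 20.
  have [|X [X2 X_dense]] := exists_edge_set R e_sym e_irr.
    rewrite lt0n; apply: contraTneq edges => ->.
    by rewrite -ltNge mulr_gt0 // exprn_gt0 // ltr0n.
  right; exists X; rewrite X2 X_dense; split => //; last lra.
  have : 0 <= alpha ^+ 2 * #|T|%:R by rewrite mulr_ge0 ?sqr_ge0.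
  lra.
case: (large_graph_case e_sym e_irr a0 a1 b0 b1 edges large) => [C4|]; last by right.
left; apply: le_trans C4; apply: C4_bound_weaken => //; apply/andP; split; lra.
Qed.
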